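(* Let $(X,d,\mu)$ be a metric space with a Borel measure $\mu$ such that there is $r>0$ with $\inf_{y\in X}\mu(B(y,r))>0$. Fix $x_0\in X$. If $\lim_{l\to\infty}\frac1l\log\mathrm{vol}_\delta^{x_0}(l)=0$ for every $\delta>0$, then $h_\infty(X)=0$.
   Context: $B(y,r)$ is the closed ball. For $\delta>0$ a $\delta$-path is a sequence $(y_0,\dots,y_n)$ with $d(y_{i-1},y_i)\le\delta$; $[x]_\delta$ is the set of points connected to $x$ by a $\delta$-path; $B_\delta(y,n)=\{y_n:\exists\ \delta\text{-path }(y,y_1,\dots,y_n)\}$. Define $\mathrm{vol}_\delta^{x}(l)=\sup_{y\in[x]_\delta}\mu(B_\delta(y,l))$. Coarse entropy $h_\infty(X)=\lim_{\delta\to\infty}\lim_{R\to\infty}\limsup_{n\to\infty}\frac1n\log s(n,R,\delta,x_0)$, where $s(n,R,\delta,x_0)$ is the supremum of cardinalities of $R$-separated sets of $\delta$-paths of length $n$ starting at $x_0$, paths compared by $\max_i d(y_i,z_i)$. *)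

From HB Require Import structures.
From mathcomp Require Import all_boot all_order all_algebra.
From mathcomp Require Import all_classical all_reals all_analysis.
Set Implicit Arguments. Unset Strict Implicit. Unset Printing Implicit Defensive.
Import Order.TTheory GRing.Theory Num.Theory.
Import numFieldNormedType.Exports.
Local Open Scope classical_set_scope.
Local Open Scope ring_scope.

Section CoarseDefs.
Variables (R : realType) (X : Type) (d : X -> X -> R).

Definition is_metric :=
  [/\ forall x y, d x y = 0 <-> x = y,
      forall x y, d x y = d y x &
      forall x y z, d x z <= d x y + d y z].

Definition d_open (A : set X) : Prop :=
  forall x, A x -> exists2 e : R, 0 < e & [set y | d x y < e] `<=` A.

Definition cball (y : X) (r : R) : set X := [set z | d y z <= r].

Definition Bdelta (delta : R) (y : X) (n : nat) : set X :=
  [set z | exists p : nat -> X,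
     [/\ p 0%N = y, p n = z & forall i, (i < n)%N -> d (p i) (p i.+1) <= delta]].

Definition dclass (delta : R) (x : X) : set X :=
  [set z | exists n, Bdelta delta x n z].

Definition is_dpath (delta : R) (x0 : X) (n : nat) (p : 'I_n.+1 -> X) : Prop :=
  p ord0 = x0 /\ forall i : 'I_n.+1, (i < n)%N -> d (p i) (p (inord i.+1)) <= delta.

Definition path_dist (n : nat) (p q : 'I_n.+1 -> X) : R :=
  \big[Num.max/0]_(i < n.+1) d (p i) (q i).

(* s(n,R,delta,x0): supremum of cardinalities of R-separated sets of
   delta-paths of length n starting at x0; a set of cardinality k is
   given by an injective enumeration f : 'I_k -> paths. *)
Definition sep_count (n : nat) (Rs delta : R) (x0 : X) : \bar R :=
  ereal_sup [set (k%:R)%:E | k in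
    [set k : nat | exists f : 'I_k -> ('I_n.+1 -> X),
       [/\ injective f, forall i, is_dpath delta x0 (f i) &
           forall i j, i != j -> Rs < path_dist (f i) (f j)]]].

Definition entropy_seq (Rs delta : R) (x0 : X) (n : nat) : \bar R :=
  ((n%:R)^-1)%:E * lne (sep_count n Rs delta x0).

Definition entropy_limsup (Rs delta : R) (x0 : X) : \bar R :=
  limn_esup (entropy_seq Rs delta x0).

(* "h_infty(X) = h": both iterated limits exist and equal h *)
Definition coarse_entropy_is (x0 : X) (h : \bar R) : Prop :=
  exists H : R -> \bar R,
    (forall delta : R,
        entropy_limsup Rs delta x0 @[Rs --> +oo] --> H delta) /\
    H delta @[delta --> +oo] --> h.
End CoarseDefs.

Section MeasDefs.
Variables (R : realType) (disp : measure_display) (T : measurableType disp).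
(* outer measure induced by mu (agrees with mu on measurable sets) *)
Definition outer (mu : set T -> \bar R) (A : set T) : \bar R :=
  ereal_inf [set mu B | B in [set B | measurable B /\ A `<=` B]].
End MeasDefs.

Definition vol_delta (R : realType) (disp : measure_display) (T : measurableType disp)
  (d : T -> T -> R) (mu : set T -> \bar R) (x0 : T) (delta : R) (l : nat) : \bar R :=
  ereal_sup [set outer mu (Bdelta d delta y l) | y in dclass d delta x0].

(** Fix a scale delta >= r and a step m.  The closed r-balls around points
    of B_delta(c, m+3), c in [x0]_delta, that are pairwise more than three
    delta-steps apart are disjoint and lie in B_delta(c, m+4); hence there are
    at most P = vol_delta(m+4) / e of them.  Sampling a family of R-separated
    delta-paths of length n every m steps, with R >= (2m+7) delta, two paths
    are more than six steps apart at some sampling time, and a greedy covering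
    argument level by level bounds the family by P^(n/m+2).  Thus the limsup
    in R of (1/n) log s(n,R,delta,x0) is at most 3 log P / m, which tends to 0
    as m grows because vol_delta grows subexponentially.  Smaller nonnegative
    scales are dominated by monotonicity in delta, and for delta < 0 there are
    no delta-paths of positive length at all. *)

From HB Require Import structures.
From mathcomp Require Import all_boot all_order all_algebra.
From mathcomp Require Import all_classical all_reals all_analysis.
From mathcomp Require Import zify ring lra.
Set Implicit Arguments.
Unset Strict Implicit.
Unset Printing Implicit Defensive.
Import Order.TTheory GRing.Theory Num.Theory.
Import numFieldNormedType.Exports.
Local Open Scope classical_set_scope.
Local Open Scope ring_scope.

Section ErealLimits.
Variable R : realType.
Local Open Scope ereal_scope.

Lemma limn_esup_le_near (u : (\bar R)^nat) (l : \bar R) :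
  (\forall n \near \oo, u n <= l) -> limn_esup u <= l.
Proof.
move=> [N _ uN]; apply: ge_ereal_inf.
exists (ereal_sup (u @` [set n | (N <= n)%N])).
  by exists [set n | (N <= n)%N] => //; exists N.
by apply: ge_ereal_sup => _ [n /uN ? <-].
Qed.

Lemma le_limn_esup (u v : (\bar R)^nat) :
  (forall n, u n <= v n) -> limn_esup u <= limn_esup v.
Proof.
move=> uv; rewrite !limn_esup_lim; apply: lee_lim; try exact: is_cvg_esups.
apply: nearW => n; apply: ge_ereal_sup => _ [k kn <-].
by apply: le_trans (uv k) _; apply: ereal_sup_ubound; exists k.
Qed.

Lemma cvge0_between (f : R -> \bar R) :
  (forall eps : R, (0 < eps)%R -> \forall x \near +oo%R, 0 <= f x <= eps%:E) ->
  f x @[x --> +oo%R] --> 0.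
Proof.
move=> fbound; apply/fine_cvgP; split.
  apply: filterS (fbound 1%R ltr01) => x /andP[f0 f1].
  by rewrite ge0_fin_numE // (le_lt_trans f1) ?ltry.
apply/cvgrPdist_le => eps eps0; apply: filterS (fbound eps eps0) => x /=.
case: (f x) => [a| |] //=.
- by rewrite !lee_fin => /andP[a0 a1]; rewrite sub0r normrN ger0_norm.
- by move=> _; rewrite subrr normr0 ltW.
Qed.

Lemma cvg0_lne_growth (V : nat -> \bar R) (eps : R) : (0 < eps)%R ->
  ((l%:R^-1)%:E * lne (V l)) @[l --> \oo] --> 0 ->
  \forall l \near \oo, exists w : R, [/\ (0 < w)%R, V l = w%:E & (ln w <= l%:R * eps)%R].
Proof.
move=> eps0 /fine_cvgP[Vfin /cvgrPdist_le /(_ eps eps0) Vclose].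
have [N _ VN] := filterI Vfin Vclose.
exists (maxn N 1) => // l /=; rewrite geq_max => /andP[/VN[] /= + + l0].
have l0' : (0 < l%:R :> R)%R by rewrite ltr0n.
case: (V l) => [w| |] /=; last 2 first.
- by rewrite mulry gtr0_sg ?invr_gt0 // mul1e.
- by rewrite mulrNy gtr0_sg ?invr_gt0 // mul1e.
case: ifPn => w0; first by rewrite mulrNy gtr0_sg ?invr_gt0 // mul1e.
rewrite sub0r normrN -EFinM /= => _ lnw; exists w; split => //; first by rewrite ltNge.
have := le_trans (ler_norm _) lnw.
by rewrite -(ler_pM2l l0') mulrA mulfV ?mul1r // gt_eqF.
Qed.

Lemma ereal_inf_gt0_lbound (I : Type) (f : I -> \bar R) :
  0 < ereal_inf (range f) -> exists2 e : R, (0 < e)%R & forall i, e%:E <= f i.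
Proof.
have lb i : ereal_inf (range f) <= f i by apply: ereal_inf_lbound; exists i.
case: (ereal_inf _) lb => [c| |] lb // c0.
- by exists c; rewrite -?lte_fin.
- by exists 1%R => // i; apply: le_trans (lb i); exact: leey.
Qed.

End ErealLimits.

Lemma finite_net (I : finType) (near : I -> I -> Prop) :
  (forall i, near i i) -> (forall i j, near i j -> near j i) ->
  exists S : {set I},
    (forall j j', j \in S -> j' \in S -> j != j' -> ~ near j j') /\
    (forall i, exists j, j \in S /\ near j i).
Proof.
move=> near_refl near_sym.
pose sep (S : {set I}) :=
  `[< forall j j', j \in S -> j' \in S -> j != j' -> ~ near j j' >].
have sep0 : sep finset.set0 by apply/asboolP => j j'; rewrite finset.in_set0.
have [S /asboolP sepS maxS] := arg_maxnP (fun S : {set I} => #|S|) sep0.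
exists S; split => // i.
have [//|far] := pselect (exists j, j \in S /\ near j i).
have iS : i \notin S by apply: contra_notN far => iS; exists i.
suff /maxS : sep (i |: S) by rewrite cardsU1 iS; lia.
apply/asboolP => j j'; rewrite !in_setU1.
move=> /predU1P[-> | jS] /predU1P[-> | j'S] //; first by rewrite eqxx.
- by move=> _ /near_sym ?; apply: far; exists j'.
- by move=> _ ?; apply: far; exists j.
- exact: sepS.
Qed.

Section Metric.
Variables (R : realType) (X : Type) (d : X -> X -> R).
Hypothesis dmetric : is_metric d.

Lemma metric_xx x : d x x = 0.
Proof. by case: dmetric => d0 _ _; apply/d0. Qed.

Lemma metric_sym x y : d x y = d y x.
Proof. by case: dmetric. Qed.

Lemma metric_triangle x y z : d x z <= d x y + d y z.
Proof. by case: dmetric. Qed.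

Lemma metric_ge0 x y : 0 <= d x y.
Proof.
have := metric_triangle x y x; rewrite metric_xx (metric_sym y x) => h.
by rewrite -(@pmulr_rge0 _ 2) // mulr2n mulrDl !mul1r.
Qed.

Lemma path_dist_gt (n : nat) (p q : 'I_n.+1 -> X) (s : R) :
  0 <= s -> s < path_dist d p q -> exists j, s < d (p j) (q j).
Proof.
move=> s0; apply: contraPP => /forallNP far; apply/negP; rewrite -leNgt.
apply: (big_ind (fun x => x <= s)) => //; first by move=> x y; rewrite ge_max => -> ->.
by move=> j _; rewrite leNgt; apply/negP => /far.
Qed.

(* Beyond its last index the path is continued by its endpoint. *)
Definition dpath_sample (n : nat) (p : 'I_n.+1 -> X) (s : nat) : X :=
  p (inord (minn s n)).

Lemma dpath_sample_ord (n : nat) (p : 'I_n.+1 -> X) (j : 'I_n.+1) :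
  dpath_sample p j = p j.
Proof. by rewrite /dpath_sample (minn_idPl (ltnSE (ltn_ord j))) inord_val. Qed.

Section DeltaPaths.
Variable delta : R.
Local Notation Bd := (Bdelta d delta).

Lemma Bdelta_refl x : Bd x 0 x.
Proof. by exists (fun=> x); split. Qed.

Lemma Bdelta_step x y : d x y <= delta -> Bd x 1 y.
Proof. by move=> xy; exists (fun i => if i is 0%N then x else y); split => // -[]. Qed.

Lemma Bdelta_trans x y z a b : Bd x a y -> Bd y b z -> Bd x (a + b) z.
Proof.
move=> [p [p0 pa pd]] [q [q0 qb qd]].
exists (fun i => if (i <= a)%N then p i else q (i - a)%N); split.
- by rewrite leq0n.
- case: (leqP (a + b) a) => h; last by rewrite addKn.
  by rewrite -qb (_ : b = 0%N) ?q0 -?pa ?addn0 //; lia.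
move=> i ib /=; case: (ltngtP i a) => ia.
- exact: pd.
- by rewrite subSn 1?ltnW //; apply: qd; lia.
- by rewrite ia subSnn pa -q0; apply: qd; lia.
Qed.

Lemma Bdelta_sym x y a : Bd x a y -> Bd y a x.
Proof.
move=> [p [p0 pa pd]]; exists (fun i => p (a - i)%N); split.
- by rewrite subn0.
- by rewrite subnn.
move=> i ia /=; rewrite metric_sym.
have -> : (a - i = (a - i.+1).+1)%N by lia.
by apply: pd; lia.
Qed.

Lemma Bdelta_dist x y a : Bd x a y -> d x y <= a%:R * delta.
Proof.
move=> [p [<- <- pd]].
suff : forall i, (i <= a)%N -> d (p 0%N) (p i) <= i%:R * delta by apply.
elim => [|i IH] ia; first by rewrite metric_xx mul0r.
apply: le_trans (metric_triangle _ (p i) _) _.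
by rewrite -addn1 natrD mulrDl mul1r lerD ?IH 1?ltnW // addn1 pd.
Qed.

Lemma dclass_Bdelta x0 c y a : dclass d delta x0 c -> Bd c a y -> dclass d delta x0 y.
Proof. by move=> [n x0c] cy; exists (n + a)%N; apply: Bdelta_trans x0c cy. Qed.

Hypothesis delta_ge0 : 0 <= delta.

Lemma Bdelta_le x y a b : (a <= b)%N -> Bd x a y -> Bd x b y.
Proof.
move=> ab [p [p0 pa pd]]; exists (fun i => p (minn i a)); split.
- by rewrite min0n.
- by rewrite (minn_idPr ab).
move=> i _ /=; case: (ltnP i a) => ia.
  by rewrite (_ : minn i.+1 a = i.+1) ?pd //; lia.
by rewrite (_ : minn i.+1 a = a) ?metric_xx //; lia.
Qed.

Lemma dpath_sample0 x0 n (p : 'I_n.+1 -> X) :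
  is_dpath d delta x0 p -> dpath_sample p 0 = x0.
Proof.
by case=> <- _; rewrite /dpath_sample min0n; congr p; apply: val_inj; rewrite /= inordK.
Qed.

Lemma dpath_sample_Bdelta x0 n (p : 'I_n.+1 -> X) a b :
  is_dpath d delta x0 p -> Bd (dpath_sample p a) b (dpath_sample p (a + b)).
Proof.
move=> [_ pd]; exists (fun s => dpath_sample p (a + s)); split; rewrite ?addn0 //.
move=> s _; rewrite /dpath_sample addnS; case: (ltnP (a + s) n) => asn.
  have := pd (inord (a + s)); rewrite inordK; last by lia.
  by rewrite (minn_idPl asn); apply.
by rewrite (_ : minn (a + s).+1 n = n) ?metric_xx //; lia.
Qed.

Lemma dpath_samples_apart x0 n m s (p q : 'I_n.+1 -> X) : (0 < m)%N ->
  is_dpath d delta x0 p -> is_dpath d delta x0 q ->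
  delta * (2 * m + 7)%:R <= s -> s < path_dist d p q ->
  exists2 t, (t < n %/ m + 2)%N &
    ~ Bd (dpath_sample p (t * m)) 6 (dpath_sample q (t * m)).
Proof.
move=> m_gt0 pP qP hs /path_dist_gt[|j pq_far].
  by apply: le_trans hs; rewrite mulr_ge0.
(* Between the sampling time (j %/ m) * m and j each path moves at most m delta. *)
exists (j %/ m)%N; first by have := leq_div2r m (ltnSE (ltn_ord j)); lia.
move=> near_ab; move: pq_far; apply/negP; rewrite -leNgt.
have sample_j r : is_dpath d delta x0 r ->
    Bd (dpath_sample r (j %/ m * m)) (j %% m) (r j).
  move=> rP; have := dpath_sample_Bdelta (j %/ m * m) (j %% m) rP.
  by rewrite -divn_eq dpath_sample_ord.
have jm : (j %% m)%:R * delta <= m%:R * delta.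
  by rewrite ler_wpM2r // ler_nat ltnW // ltn_pmod.
have hs' : 2 * (m%:R * delta) + 6 * delta <= s.
  by apply: le_trans hs; rewrite natrD natrM; have := delta_ge0; nra.
have := Bdelta_dist (sample_j _ pP); have := Bdelta_dist (sample_j _ qP).
have := Bdelta_dist near_ab.
set a := dpath_sample p _; set b := dpath_sample q _ => ab bq ap.
have := metric_triangle (p j) a (q j); have := metric_triangle a b (q j).
rewrite (metric_sym (p j) a); lra.
Qed.

Definition packing_bound (x0 : X) (A : nat) (P : R) :=
  forall (I : finType) (c : X) (z : I -> X), dclass d delta x0 c ->
    (forall j, Bd c A (z j)) -> (forall j j', j != j' -> ~ Bd (z j) 3 (z j')) ->
    #|I|%:R <= P.

Lemma packing_bound_ge1 x0 A P : packing_bound x0 A P -> 1 <= P.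
Proof.
move=> hP; have := hP unit x0 (fun=> x0); rewrite card_unit; apply.
- by exists 0%N; apply: Bdelta_refl.
- by move=> _; apply: Bdelta_le (leq0n A) (Bdelta_refl _).
- by move=> [] [].
Qed.

Lemma card_separated_samples_le x0 m P K (I : finType) (c : X) (W : I -> nat -> X) :
  packing_bound x0 (m + 3) P -> dclass d delta x0 c ->
  (forall i, Bd c (m + 3) (W i 0%N)) -> (forall i t, Bd (W i t) m (W i t.+1)) ->
  (forall i i', i != i' -> exists2 t, (t < K)%N & ~ Bd (W i t) 6 (W i' t)) ->
  #|I|%:R <= P ^+ K.
Proof.
(* A maximal 3-separated set S of starting points has at most P elements and
   every chain starts near one of them; the chains attached to each point of S,
   shifted by one step, satisfy the hypotheses for K. *)
move=> hP; have P_ge0 : 0 <= P by apply: le_trans (packing_bound_ge1 hP).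
elim: K I c W => [|K IH] I c W x0c cW Wstep Wsep.
  rewrite expr0 -[1]mulr1n ler_nat; apply/fintype_le1P => i i'.
  by apply/eqP/negPn/negP => /Wsep[].
have near_refl i : Bd (W i 0%N) 3 (W i 0%N) by apply: Bdelta_le (Bdelta_refl _).
have [S [Ssep Scover]] := @finite_net I (fun i j => Bd (W i 0%N) 3 (W j 0%N))
  near_refl (fun i j => @Bdelta_sym (W i 0%N) (W j 0%N) 3).
have [g gP] := boolp.choice Scover.
have -> : #|I|%:R = \sum_(i : I) 1 :> R by rewrite sumr_const.
rewrite (partition_big g (mem S)) /= => [|i _]; last exact: (gP i).1.
rewrite exprS; apply: (@le_trans _ _ (\sum_(j in S) P ^+ K)).
  apply: ler_sum => j _; rewrite sumr_const -card_sig.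
  have j_near (i : {i | g i == j}) : Bd (W j 0%N) 3 (W (val i) 0%N).
    by have [_] := gP (val i); rewrite (eqP (valP i)).
  apply: (IH _ (W j 0%N) (fun i t => W (val i) t.+1)).
  - exact: dclass_Bdelta x0c (cW j).
  - by move=> i; rewrite addnC; apply: Bdelta_trans (j_near i) (Wstep _ 0%N).
  - by move=> i t; apply: Wstep.
  - move=> i i' ii'; have [[|t] tK far] := Wsep _ _ ii'; last by exists t.
    by case: far; apply: Bdelta_trans (Bdelta_sym (j_near i)) (j_near i').
rewrite sumr_const -mulr_natl ler_wpM2r ?exprn_ge0 //.
rewrite -[#|S|]card_sig; apply: (hP _ c (fun j => W (val j) 0%N) x0c) => [j|j j' jj'].
  exact: cW.
exact: Ssep (valP j) (valP j') jj'.
Qed.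

Lemma sep_count_ge1 n s x0 : (1 <= sep_count d n s delta x0)%E.
Proof.
apply: ereal_sup_ubound; exists 1%N => //; exists (fun _ _ => x0); split.
- by move=> i j _; rewrite !ord1.
- by move=> i; split => // j _; rewrite metric_xx.
- by move=> i j; rewrite !ord1 eqxx.
Qed.

Lemma entropy_seq_ge0 s x0 n : (0 <= entropy_seq d s delta x0 n)%E.
Proof. by apply: mule_ge0; rewrite ?lee_fin ?invr_ge0 // lne_ge0 sep_count_ge1. Qed.

Lemma entropy_limsup_ge0 s x0 : (0 <= entropy_limsup d s delta x0)%E.
Proof. by apply: limf_esup_ge0 => // n; apply: entropy_seq_ge0. Qed.

Lemma sep_count_le_packing x0 m P n s : (0 < m)%N -> packing_bound x0 (m + 3) P ->
  delta * (2 * m + 7)%:R <= s ->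
  (sep_count d n s delta x0 <= (P ^+ (n %/ m + 2))%:E)%E.
Proof.
move=> m_gt0 hP hs; apply: ub_ereal_sup => _ [k [f [_ fP fsep]] <-].
rewrite lee_fin -[k in k%:R]card_ord.
apply: (card_separated_samples_le (c := x0)
  (W := fun i t => dpath_sample (f i) (t * m)) hP).
- by exists 0%N; apply: Bdelta_refl.
- by move=> i; rewrite mul0n (dpath_sample0 (fP i)); apply: Bdelta_le (Bdelta_refl _).
- by move=> i t; rewrite mulSn addnC; apply: dpath_sample_Bdelta (fP i).
- by move=> i i' ii'; apply: dpath_samples_apart (fP i) (fP i') hs (fsep _ _ ii').
Qed.

Lemma entropy_seq_le_packing x0 m P n s : (0 < m)%N -> (m <= n)%N ->
  packing_bound x0 (m + 3) P -> delta * (2 * m + 7)%:R <= s ->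
  (entropy_seq d s delta x0 n <= (3 * ln P / m%:R)%:E)%E.
Proof.
move=> m_gt0 mn hP hs; have P_ge1 := packing_bound_ge1 hP.
have P_gt0 : 0 < P by apply: lt_le_trans P_ge1.
have n_gt0 : 0 < n%:R :> R by rewrite ltr0n; apply: leq_trans mn.
apply: (@le_trans _ _ ((n%:R^-1)%:E * lne (P ^+ (n %/ m + 2))%:E)%E).
  apply: lee_wpmul2l; first by rewrite lee_fin invr_ge0.
  rewrite lee_lne ?in_itv /= ?leey ?andbT ?sep_count_le_packing //.
    exact: le_trans (sep_count_ge1 _ _ _).
  by rewrite lee_fin exprn_ge0 // ltW.
rewrite lne_EFin ?exprn_gt0 // lnXn // -[ln P *+ _]mulr_natl -EFinM lee_fin.
have K_le : (n %/ m + 2)%:R <= 3 * n%:R / m%:R :> R.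
  rewrite ler_pdivlMr ?ltr0n // -!natrM ler_nat.
  by have := leq_trunc_div n m; lia.
have ninv_ge0 : 0 <= n%:R^-1 :> R by rewrite invr_ge0 ltW.
apply: le_trans (ler_wpM2l ninv_ge0 (ler_wpM2r (ln_ge0 P_ge1) K_le)) _.
suff -> : n%:R^-1 * (3 * n%:R / m%:R * ln P) = 3 * ln P / m%:R by [].
by field; rewrite pnatr_eq0 -lt0n m_gt0 (gt_eqF n_gt0).
Qed.

Lemma entropy_limsup_le_packing x0 m P s : (0 < m)%N -> packing_bound x0 (m + 3) P ->
  delta * (2 * m + 7)%:R <= s ->
  (entropy_limsup d s delta x0 <= (3 * ln P / m%:R)%:E)%E.
Proof.
move=> m_gt0 hP hs; apply: limn_esup_le_near.
by exists m => // n /= mn; apply: entropy_seq_le_packing.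
Qed.

End DeltaPaths.

Lemma le_sep_count_delta n s delta delta' x0 : delta <= delta' ->
  (sep_count d n s delta x0 <= sep_count d n s delta' x0)%E.
Proof.
move=> le_delta; apply: ereal_sup_le => _ [k [f [f_inj fP fsep]] <-].
exists k => //; exists f; split => // i; have [f0 fd] := fP i.
by split => // j ij; apply: le_trans (fd j ij) le_delta.
Qed.

Lemma le_entropy_limsup_delta s delta delta' x0 : 0 <= delta -> delta <= delta' ->
  (entropy_limsup d s delta x0 <= entropy_limsup d s delta' x0)%E.
Proof.
move=> delta_ge0 le_delta; apply: le_limn_esup => n.
apply: lee_wpmul2l; first by rewrite lee_fin invr_ge0.
have ge1 := sep_count_ge1 delta_ge0 n s x0.
rewrite lee_lne ?in_itv /= ?leey ?andbT ?le_sep_count_delta //.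
- exact: le_trans lee01 ge1.
- exact: le_trans (le_trans lee01 ge1) (le_sep_count_delta _ _ _ le_delta).
Qed.

Lemma entropy_limsup_neg s delta x0 : delta < 0 ->
  entropy_limsup d s delta x0 = -oo%E.
Proof.
move=> delta_lt0; apply/eqP; rewrite -leeNy_eq; apply: limn_esup_le_near.
exists 1%N => // n n_gt0.
have no_dpath : (sep_count d n s delta x0 <= 0)%E.
  apply: ge_ereal_sup => _ [[|k] [f [_ fP _]] <-] //.
  have [_ /(_ ord0 n_gt0)/(le_trans (metric_ge0 _ _))] := fP ord0.
  by rewrite leNgt delta_lt0.
by rewrite /entropy_seq le0_lneNy // mulrNy gtr0_sg ?mul1e // invr_gt0 ltr0n.
Qed.

End Metric.

Lemma scaled_ln_ratio_le (R : realType) (w e eps : R) (m : nat) :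
  0 < w -> 0 < e -> 0 < eps -> (8 <= m)%N -> 12 * `|ln e| <= eps * m%:R ->
  ln w <= (m + 4)%:R * (eps / 8) -> 3 * ln (w / e) / m%:R <= eps.
Proof.
move=> w_gt0 e_gt0 eps_gt0 m_ge8 lne_small lnw_le.
have m_ge8' : 8 <= m%:R :> R by rewrite ler_nat.
have lne_norm : - ln e <= `|ln e| by rewrite -normrN ler_norm.
rewrite ler_pdivrMr; last by apply: lt_le_trans m_ge8'.
rewrite lnM ?posrE ?invr_gt0 // lnV ?posrE //.
move: lnw_le; rewrite natrD; nra.
Qed.

Section VolumePacking.
Variables (R : realType) (disp : measure_display) (T : measurableType disp).
Variables (d : T -> T -> R) (mu : {measure set T -> \bar R}).
Hypothesis dmetric : is_metric d.
Hypothesis measurable_metric : @measurable disp T = <<s d_open d >>.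
Variables (r e : R).
Hypothesis e_gt0 : 0 < e.
Hypothesis mu_cball_ge : forall y, (e%:E <= mu (cball d y r))%E.

Lemma measurable_cball y s : measurable (cball d y s).
Proof.
rewrite -[cball _ _ _]setCK; apply: measurableC; rewrite measurable_metric.
apply: sub_gen_smallest => z /= zy.
have yz : s < d y z by rewrite ltNge; apply/negP.
exists (d y z - s); first by rewrite subr_gt0.
move=> x /= zx yx; have := metric_triangle dmetric y x z.
by rewrite (metric_sym dmetric x z); move: zx yx; rewrite /cball /=; lra.
Qed.

Lemma card_packing_le_vol delta x0 A M c (z : 'I_M -> T) : 0 <= delta -> r <= delta ->
  dclass d delta x0 c -> (forall j, Bdelta d delta c A (z j)) ->
  (forall j j', j != j' -> ~ Bdelta d delta (z j) 3 (z j')) ->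
  ((M%:R * e)%:E <= vol_delta d mu x0 delta A.+1)%E.
Proof.
move=> delta_ge0 r_le x0c cz zsep.
pose ball k := cball d (z k) r.
have ball_Bdelta k y : ball k y -> Bdelta d delta (z k) 1 y.
  by move=> zy; apply: Bdelta_step; apply: le_trans zy r_le.
have ball_disj : trivIset [set: 'I_M] ball.
  move=> i j _ _ [y [/ball_Bdelta iy /ball_Bdelta jy]]; apply/eqP/negPn/negP => ij.
  apply: (zsep _ _ ij); apply: (Bdelta_le dmetric delta_ge0 (leqnSn 2)).
  exact: Bdelta_trans iy (Bdelta_sym dmetric jy).
apply: le_trans (_ : outer mu (Bdelta d delta c A.+1) <= _)%E; last first.
  by apply: ereal_sup_ubound; exists c.
apply: le_ereal_inf_tmp => _ [B [mB cB] <-].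
apply: (@le_trans _ _ (mu (\big[setU/set0]_(k < M) ball k))); last first.
  apply: le_measure; rewrite ?inE //.
    by apply: bigsetU_measurable => k _; apply: measurable_cball.
  apply: (big_ind (fun S => S `<=` B)) => //; first by move=> S1 S2 h1 h2 x [/h1|/h2].
  move=> k _ y /ball_Bdelta ky; apply: cB.
  by rewrite -addn1; apply: Bdelta_trans (cz k) ky.
rewrite measure_bigsetU_ord // => [|k]; last exact: measurable_cball.
apply: (@le_trans _ _ (\sum_(k < M) e%:E)).
  by rewrite sumEFin sumr_const card_ord mulr_natl.
by apply: lee_sum => k _; apply: mu_cball_ge.
Qed.

Lemma packing_bound_vol delta x0 A w : 0 <= delta -> r <= delta ->
  vol_delta d mu x0 delta A.+1 = w%:E -> packing_bound d delta x0 A (w / e).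
Proof.
move=> delta_ge0 r_le vol_w I c z x0c cz zsep.
rewrite ler_pdivlMr // -lee_fin -vol_w.
apply: (card_packing_le_vol (c := c) (z := fun k => z (enum_val k))) => // j j' jj'.
by apply: zsep; apply: contra jj' => /eqP/enum_val_inj ->.
Qed.

Lemma entropy_limsup_cvg0 delta x0 : 0 < delta -> r <= delta ->
  (((l%:R)^-1)%:E * lne (vol_delta d mu x0 delta l))%E @[l --> \oo] --> 0%E ->
  entropy_limsup d s delta x0 @[s --> +oo] --> 0%E.
Proof.
move=> delta_gt0 r_le growth; apply: cvge0_between => eps eps_gt0.
have [N _ volN] := cvg0_lne_growth (divr_gt0 eps_gt0 (ltr0n _ 8)) growth.
(* m >= 8 and m >= 12 |ln e| / eps make 3 ln (vol/e) / m <= eps. *)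
pose m := maxn (maxn 8 N) (Num.bound (12 * `|ln e| / eps)).
have m_ge8 : (8 <= m)%N by rewrite /m; lia.
have mN : (N <= (m + 3).+1)%N by rewrite /m; lia.
have [w [w_gt0 vol_w ln_w]] := volN _ mN.
have lne_small : 12 * `|ln e| <= eps * m%:R.
  rewrite -ler_pdivrMl // mulrC; apply/ltW/(lt_le_trans (archi_boundP _)).
    by rewrite divr_ge0 ?mulr_ge0 // ltW.
  by rewrite ler_nat leq_maxr.
exists (delta * (2 * m + 7)%:R); split; first exact: num_real.
move=> s /ltW hs; rewrite entropy_limsup_ge0 ?(ltW delta_gt0) //=.
have hP := packing_bound_vol (ltW delta_gt0) r_le vol_w.
have m_gt0 : (0 < m)%N by apply: leq_trans m_ge8.
apply: le_trans (entropy_limsup_le_packing dmetric (ltW delta_gt0) m_gt0 hP hs) _.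
by rewrite lee_fin; apply: scaled_ln_ratio_le => //; move: ln_w; rewrite -addn1 -addnA.
Qed.

End VolumePacking.

Theorem mainTheorem15 (R : realType) (disp : measure_display)
  (T : measurableType disp) (d : T -> T -> R)
  (mu : {measure set T -> \bar R}) (x0 : T) :
  is_metric d ->
  (@measurable disp T = <<s d_open d >>) ->
  (exists2 r : R, 0 < r &
     (0 < ereal_inf [set mu (cball d y r) | y in [set: T]])%E) ->
  (forall delta : R, 0 < delta ->
     (((l%:R)^-1)%:E * lne (vol_delta d mu x0 delta l))%E @[l --> \oo] --> 0%E) ->
  coarse_entropy_is d x0 0%E.
Proof.
move=> dmetric measurable_metric [r r_gt0 inf_gt0] growth.
have [e e_gt0 mu_cball_ge] := ereal_inf_gt0_lbound inf_gt0.
exists (fun delta => if delta < 0 then -oo%E else 0%E); split => [delta|]; last first.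
  apply: cvg_near_cst; exists 0; split => [|x /ltW]; first exact: num_real.
  by rewrite ltNge => ->.
have [delta_lt0|delta_ge0] := ltP delta 0.
  by apply: cvg_near_cst; apply: nearW => s; exact: entropy_limsup_neg.
have r_le : r <= Num.max delta r by rewrite le_max lexx orbT.
apply: (@squeeze_cvge _ _ _ _ (cst 0%E) _
  (fun s => entropy_limsup d s (Num.max delta r) x0)); last 2 first.
- exact: cvg_cst.
- have delta'_gt0 := lt_le_trans r_gt0 r_le.
  exact: (entropy_limsup_cvg0 dmetric measurable_metric e_gt0 mu_cball_ge
    delta'_gt0 r_le (growth _ delta'_gt0)).
apply: nearW => s; rewrite entropy_limsup_ge0 //=.
by apply: le_entropy_limsup_delta; rewrite // le_max lexx.
Qed.
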